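(* Let $\alpha,\beta>-1$, $n\ge1$, and $d_{k,n}$ as defined below. For $0\le k\le n$: (i) if $\alpha>\beta$ and $\alpha+\beta\ge-1$, then $d_{k,n}>0$; (ii) if $\alpha<\beta$ and $\alpha+\beta\ge-1$, then $(-1)^{n-k}d_{k,n}>0$; (iii) if $\alpha=\beta>-\tfrac12$, then $d_{k,n}>0$ when $n-k$ is even and $d_{k,n}=0$ when $n-k$ is odd; if $\alpha=\beta=-\tfrac12$, then $d_{n,n}>0$ and $d_{k,n}=0$ for $k=1,\dots,n-1$.
   Context: For $\alpha,\beta>-1$ and $0\le k\le n$, $d_{k,n}=\frac{(n+\alpha+\beta+1)_k(k+\alpha+1)_{n-k}}{(n-k)!\,2^{2k}\Gamma(k+1)}\,{}_3F_2\!\left[\begin{matrix}k-n,\ n+k+\alpha+\beta+1,\ k+\frac12\\ k+\alpha+1,\ 2k+1\end{matrix};1\right]$, with $(a)_k$ the Pochhammer symbol and ${}_3F_2$ the generalized hypergeometric series. Equivalently, $P_n^{(\alpha,\beta)}(x)=d_{0,n}+2\sum_{k=1}^n d_{k,n}T_k(x)$, where $P_n^{(\alpha,\beta)}$ is the Jacobi polynomial and $T_k$ the Chebyshev polynomial of the first kind. *)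

From Stdlib Require Import Reals Factorial.
Open Scope R_scope.

Fixpoint poch (a : R) (k : nat) : R :=
  match k with
  | O => 1
  | S k' => poch a k' * (a + INR k')
  end.

Definition hyp3F2_term (a1 a2 a3 b1 b2 : R) (j : nat) : R :=
  poch a1 j * poch a2 j * poch a3 j / (poch b1 j * poch b2 j * INR (fact j)).

(* 3F2 at 1 with upper parameter a1 = -N (N a natural number): the series
   terminates, all terms with j > N vanish, so it equals the finite sum
   of the terms j = 0 .. N. *)
Definition hyp3F2_terminating (N : nat) (a2 a3 b1 b2 : R) : R :=
  sum_f_R0 (hyp3F2_term (- INR N) a2 a3 b1 b2) N.

(* d_{k,n} (alpha, beta); Gamma(k+1) = k!. Here k - n = -(n-k) for k <= n. *)
Definition dkn (alpha beta : R) (k n : nat) : R :=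
  poch (INR n + alpha + beta + 1) k * poch (INR k + alpha + 1) (n - k)
  / (INR (fact (n - k)) * 2 ^ (2 * k) * INR (fact k))
  * hyp3F2_terminating (n - k) (INR n + INR k + alpha + beta + 1)
      (INR k + / 2) (INR k + alpha + 1) (2 * INR k + 1).

From Stdlib Require Import Reals Factorial Lra Lia Psatz.
Open Scope R_scope.

(* Expanding the terminating 3F2, [d_{k,n} = sum_j (-1)^j B_{k+j} / (j! (2k+j)!)]
   for explicit Pochhammer products [B_i].  Creative telescoping in [j] yields the
   three-term recurrence
     (n-k)(n+k+1+a+b) d_k = (n+k+2)(n-k-1+a+b) d_{k+2} + 2(a-b)(k+1) d_{k+1},
   with [d_{n+1} = 0] and [d_n > 0].  Under [a+b >= -1] all coefficients have a
   fixed sign (after the twist [(-1)^(n+k)] when [a < b]), so positivity propagates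
   down from [k = n]; for [a = b] the middle term drops and only the parity of
   [n - k] matters; for [a = b = -1/2] the coefficient of [d_n] at [k = n - 2]
   vanishes as well, so everything below [n] is zero. *)

Lemma poch_pos a k : 0 < a -> 0 < poch a k.
Proof.
  intros Ha. induction k as [|k IH]; simpl; [lra|].
  apply Rmult_lt_0_compat; [exact IH|]. pose proof (pos_INR k). lra.
Qed.

Lemma poch_add a p q : poch a (p + q) = poch a p * poch (a + INR p) q.
Proof.
  induction q as [|q IH].
  - rewrite Nat.add_0_r. simpl. ring.
  - rewrite Nat.add_succ_r. simpl. rewrite IH, plus_INR. ring.
Qed.

Lemma poch_opp_nat N j : (j <= N)%nat ->
  poch (- INR N) j * INR (fact (N - j)) = (-1) ^ j * INR (fact N).
Proof.
  induction j as [|j IH]; intros Hj.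
  - simpl. rewrite Nat.sub_0_r. ring.
  - change ((-1) ^ S j) with (-1 * (-1) ^ j). rewrite Rmult_assoc, <- IH by lia.
    replace (N - j)%nat with (S (N - S j)) by lia.
    rewrite fact_simpl, mult_INR, S_INR, minus_INR, (S_INR j) by lia.
    simpl poch. ring.
Qed.

Lemma poch_half_fact k : poch (/2) k * 2 ^ (2 * k) * INR (fact k) = INR (fact (2 * k)).
Proof.
  induction k as [|k IH]; [simpl; lra|].
  replace (2 * S k)%nat with (S (S (2 * k))) by lia.
  rewrite !fact_simpl, !mult_INR, <- IH, !S_INR, mult_INR.
  simpl pow. simpl poch. simpl (INR 2). field.
Qed.

Lemma poch_nat_succ_fact p q : poch (INR p + 1) q * INR (fact p) = INR (fact (p + q)).
Proof.
  induction q as [|q IH].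
  - rewrite Nat.add_0_r. simpl. ring.
  - rewrite Nat.add_succ_r, fact_simpl, mult_INR, <- IH. simpl poch.
    rewrite S_INR, plus_INR. ring.
Qed.

Lemma recurrence_pos (c A B C : nat -> R) n :
  c (S n) = 0 -> 0 < c n ->
  (forall p, (p < n)%nat ->
     0 < A p /\ ((S (S p) <= n)%nat -> 0 <= B p) /\ 0 < C p /\
     A p * c p = B p * c (S (S p)) + C p * c (S p)) ->
  forall k, (k <= n)%nat -> 0 < c k.
Proof.
  intros Hout Htop Hrec.
  assert (Hdown : forall t, (t <= n)%nat -> 0 < c (n - t)%nat /\ 0 <= c (S (n - t))).
  { induction t as [|t IH]; intros Ht.
    - rewrite Nat.sub_0_r. lra.
    - destruct (IH ltac:(lia)) as [H1 H2].
      replace (n - t)%nat with (S (n - S t)) in H1, H2 by lia.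
      destruct (Hrec (n - S t)%nat ltac:(lia)) as (HA & HB & HC & E).
      split; [|lra].
      assert (HBc : 0 <= B (n - S t)%nat * c (S (S (n - S t)))).
      { destruct t as [|t].
        - replace (S (S (n - 1))) with (S n) by lia. rewrite Hout. lra.
        - apply Rmult_le_pos; [apply HB; lia | exact H2]. }
      apply (Rmult_lt_reg_l (A (n - S t)%nat)); [exact HA|].
      rewrite Rmult_0_r, E. nra. }
  intros k Hk. replace k with (n - (n - k))%nat by lia. apply Hdown. lia.
Qed.

Definition alternating (t : nat) (x : R) : Prop :=
  if Nat.even t then 0 < x else x = 0.

Lemma recurrence_parity (c A B : nat -> R) n :
  c (S n) = 0 -> 0 < c n ->
  (forall p, (p < n)%nat ->
     0 < A p /\ ((S (S p) <= n)%nat -> 0 < B p) /\ A p * c p = B p * c (S (S p))) ->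
  forall t, (t <= n)%nat -> alternating t (c (n - t)%nat).
Proof.
  intros Hout Htop Hrec.
  enough (Hdown : forall t, (t <= n)%nat ->
            alternating t (c (n - t)%nat) /\ alternating (S t) (c (S (n - t))))
    by (intros t Ht; apply Hdown, Ht).
  induction t as [|t IH]; intros Ht.
  - rewrite Nat.sub_0_r. split; assumption.
  - destruct (IH ltac:(lia)) as [H1 H2].
    replace (n - t)%nat with (S (n - S t)) in H1, H2 by lia.
    split; [|exact H1].
    set (p := (n - S t)%nat) in *.
    destruct (Hrec p ltac:(lia)) as (HA & HB & E).
    unfold alternating in *.
    destruct (Nat.even (S t)) eqn:Ev.
    + assert (HBp : 0 < B p) by (apply HB; destruct t; [discriminate Ev | lia]).
      apply (Rmult_lt_reg_l (A p)); [exact HA|]. rewrite Rmult_0_r, E. nra.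
    + apply (Rmult_eq_reg_l (A p)); [|lra]. rewrite E, H2. ring.
Qed.

Lemma recurrence_zero_below (c A B C : nat -> R) m :
  c m = 0 -> c (S m) = 0 ->
  (forall p, (p < m)%nat ->
     A p <> 0 /\ A p * c p = B p * c (S (S p)) + C p * c (S p)) ->
  forall k, (k <= S m)%nat -> c k = 0.
Proof.
  intros Hm HSm Hrec.
  assert (Hdown : forall t, (t <= m)%nat -> c (m - t)%nat = 0 /\ c (S (m - t)) = 0).
  { induction t as [|t IH]; intros Ht.
    - rewrite Nat.sub_0_r. split; assumption.
    - destruct (IH ltac:(lia)) as [H1 H2].
      replace (m - t)%nat with (S (m - S t)) in H1, H2 by lia.
      split; [|exact H1].
      destruct (Hrec (m - S t)%nat ltac:(lia)) as (HA & E).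
      apply (Rmult_eq_reg_l (A (m - S t)%nat)); [|exact HA].
      rewrite E, H1, H2. ring. }
  intros k Hk. destruct (Nat.eq_dec k (S m)) as [->|Hne]; [exact HSm|].
  replace k with (m - (m - k))%nat by lia. apply Hdown. lia.
Qed.

(* [cheb_coef al be n k] is [d_{k,n}] with the terminating 3F2 written out and
   its Pochhammer quotients collected in [cheb_B]; it is extended by [0] for
   [k > n], the boundary value of the recurrence below. *)
Definition cheb_B (al be : R) (n i : nat) : R :=
  poch (INR n + al + be + 1) i * poch (INR i + al + 1) (n - i) * poch (/2) i
  / INR (fact (n - i)).

Definition cheb_term (al be : R) (n k j : nat) : R :=
  (-1) ^ j * cheb_B al be n (k + j) / (INR (fact j) * INR (fact (2 * k + j))).

Definition cheb_coef (al be : R) (n k : nat) : R :=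
  if (k <=? n)%nat then sum_f_R0 (cheb_term al be n k) (n - k) else 0.

Lemma dkn_cheb_coef al be n k : -1 < al -> (k <= n)%nat ->
  dkn al be k n = cheb_coef al be n k.
Proof.
  intros Hal Hk. unfold dkn, cheb_coef, hyp3F2_terminating.
  apply Nat.leb_le in Hk as Hkb. rewrite Hkb.
  rewrite scal_sum. apply sum_eq. intros j Hj.
  set (N := (n - k)%nat) in *.
  unfold cheb_term, cheb_B, hyp3F2_term.
  replace (n - (k + j))%nat with (N - j)%nat by (unfold N; lia).
  rewrite (poch_add (INR n + al + be + 1) k j), (poch_add (/2) k j).
  replace (INR n + al + be + 1 + INR k) with (INR n + INR k + al + be + 1) by ring.
  replace (/2 + INR k) with (INR k + /2) by ring.
  assert (Esplit : poch (INR k + al + 1) N =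
                   poch (INR k + al + 1) j * poch (INR (k + j) + al + 1) (N - j)).
  { replace N with (j + (N - j))%nat at 1 by lia.
    rewrite poch_add, plus_INR. f_equal. f_equal. ring. }
  rewrite Esplit.
  assert (Efact := poch_nat_succ_fact (2 * k) j).
  rewrite mult_INR in Efact. simpl (INR 2) in Efact.
  replace ((1 + 1) * INR k + 1) with (2 * INR k + 1) in Efact by ring.
  rewrite <- Efact, <- (poch_half_fact k).
  assert (Hf : forall m, INR (fact m) <> 0) by apply INR_fact_neq_0.
  assert (HY : poch (INR k + al + 1) j <> 0).
  { apply Rgt_not_eq, poch_pos. pose proof (pos_INR k). lra. }
  assert (HQ : poch (2 * INR k + 1) j <> 0).
  { apply Rgt_not_eq, poch_pos. pose proof (pos_INR k). lra. }
  assert (HH : poch (/2) k <> 0) by (apply Rgt_not_eq, poch_pos; lra).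
  assert (H2 : 2 ^ (2 * k) <> 0) by (apply pow_nonzero; lra).
  apply (Rmult_eq_reg_r (INR (fact (N - j)))); [|apply Hf].
  replace ((-1) ^ j) with (poch (- INR N) j * INR (fact (N - j)) / INR (fact N))
    by (rewrite poch_opp_nat by exact Hj; field; apply Hf).
  field. repeat split; auto.
Qed.

Lemma cheb_B_succ al be n i : (i < n)%nat ->
  cheb_B al be n (S i) * (INR (S i) + al) =
  cheb_B al be n i * (INR n + al + be + 1 + INR i) * (INR i + /2) * (INR n - INR i).
Proof.
  intros Hi. unfold cheb_B.
  replace (n - i)%nat with (S (n - S i)) by lia.
  change (S (n - S i)) with (1 + (n - S i))%nat at 1.
  rewrite poch_add, fact_simpl, mult_INR.
  replace (INR (S (n - S i))) with (INR n - INR i)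
    by (rewrite S_INR, minus_INR, S_INR by lia; ring).
  replace (INR i + al + 1 + INR 1) with (INR (S i) + al + 1) by (rewrite S_INR; simpl; ring).
  assert (Hn : INR n - INR i <> 0) by (apply lt_INR in Hi; lra).
  simpl poch. rewrite S_INR. field. split; [apply INR_fact_neq_0 | exact Hn].
Qed.

Lemma cheb_term_succ al be n p s : -1 < al -> (p + s < n)%nat ->
  cheb_term al be n p (S s) =
  - cheb_term al be n p s * (INR n + al + be + 1 + INR p + INR s) * (INR p + INR s + /2)
    * (INR n - INR p - INR s)
    / (INR (S s) * (2 * INR p + 1 + INR s) * (INR p + INR s + 1 + al)).
Proof.
  intros Hal Hps. unfold cheb_term.
  assert (HB := cheb_B_succ al be n (p + s) Hps).
  replace (p + S s)%nat with (S (p + s)) by lia.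
  replace (2 * p + S s)%nat with (S (2 * p + s)) by lia.
  rewrite !fact_simpl, !mult_INR, !S_INR, !plus_INR in *. rewrite mult_INR in *.
  simpl (INR 2) in *.
  assert (0 <= INR p) by apply pos_INR. assert (0 <= INR s) by apply pos_INR.
  apply (Rmult_eq_reg_r (INR p + INR s + 1 + al)); [|lra].
  simpl pow.
  replace (cheb_B al be n (S (p + s)))
    with (cheb_B al be n (S (p + s)) * (INR p + INR s + 1 + al) / (INR p + INR s + 1 + al))
    by (field; lra).
  rewrite HB. field. repeat split; try apply INR_fact_neq_0; lra.
Qed.

Lemma sum_f_R0_shift (f : nat -> R) N :
  f 0%nat = 0 -> sum_f_R0 f (S N) = sum_f_R0 (fun i => f (S i)) N.
Proof. intros H0. rewrite decomp_sum by lia. simpl pred. rewrite H0. ring. Qed.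

Lemma cheb_coef_succ al be n p : (p < n)%nat ->
  cheb_coef al be n (S p) =
  sum_f_R0 (fun s => - cheb_term al be n p s * INR s / (2 * INR p + 1 + INR s)) (n - p).
Proof.
  intros Hp. unfold cheb_coef. apply Nat.leb_le in Hp as Hpb. rewrite Hpb.
  replace (n - p)%nat with (S (n - S p)) by lia.
  rewrite sum_f_R0_shift by (rewrite INR_0; unfold Rdiv; ring).
  apply sum_eq. intros j _. unfold cheb_term.
  replace (p + S j)%nat with (S p + j)%nat by lia.
  replace (2 * p + S j)%nat with (S (2 * p + j)) by lia.
  replace (2 * S p + j)%nat with (S (S (2 * p + j))) by lia.
  rewrite !fact_simpl, !mult_INR, !S_INR, plus_INR, mult_INR.
  simpl (INR 2). simpl pow.
  assert (0 <= INR p) by apply pos_INR. assert (0 <= INR j) by apply pos_INR.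
  field. repeat split; try apply INR_fact_neq_0; lra.
Qed.

Lemma cheb_coef_succ_succ al be n p : (p < n)%nat ->
  cheb_coef al be n (S (S p)) =
  sum_f_R0 (fun s => cheb_term al be n p s * INR s * (INR s - 1)
     / ((2 * INR p + 1 + INR s) * (2 * INR p + 2 + INR s))) (n - p).
Proof.
  intros Hp. unfold cheb_coef.
  destruct (Nat.eq_dec (S p) n) as [Hn|Hn].
  - replace (S (S p) <=? n)%nat with false by (symmetry; apply Nat.leb_gt; lia).
    replace (n - p)%nat with 1%nat by lia.
    simpl. unfold Rdiv. ring.
  - replace (S (S p) <=? n)%nat with true by (symmetry; apply Nat.leb_le; lia).
    replace (n - p)%nat with (S (S (n - S (S p)))) by lia.
    rewrite !sum_f_R0_shift by (rewrite ?S_INR, INR_0; unfold Rdiv; ring).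
    apply sum_eq. intros j _. unfold cheb_term.
    replace (p + S (S j))%nat with (S (S p) + j)%nat by lia.
    replace (2 * p + S (S j))%nat with (S (S (2 * p + j))) by lia.
    replace (2 * S (S p) + j)%nat with (S (S (S (S (2 * p + j))))) by lia.
    rewrite !fact_simpl, !mult_INR, !S_INR, plus_INR, mult_INR.
    simpl (INR 2). simpl pow.
    assert (0 <= INR p) by apply pos_INR. assert (0 <= INR j) by apply pos_INR.
    field. repeat split; try apply INR_fact_neq_0; lra.
Qed.

Lemma sum_f_R0_telescope_zero (z Z : nat -> R) L :
  (forall s, (s < L)%nat -> Z s = z (S s)) -> Z L = 0 -> z 0%nat = 0 ->
  sum_f_R0 (fun s => Z s - z s) L = 0.
Proof.
  intros Hstep HL H0.
  assert (Hpart : forall m, (m <= L)%nat -> sum_f_R0 (fun s => Z s - z s) m = Z m - z 0%nat).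
  { induction m as [|m IH]; intros Hm; [reflexivity|].
    rewrite tech5, IH by lia. rewrite (Hstep m) by lia. ring. }
  rewrite Hpart, HL, H0 by lia. ring.
Qed.

Definition cheb_rec_A (al be : R) (n p : nat) : R :=
  (INR n - INR p) * (INR n + INR p + 1 + al + be).

Definition cheb_rec_B (al be : R) (n p : nat) : R :=
  (INR n + INR p + 2) * (INR n - INR p - 1 + al + be).

Definition cheb_rec_C (al be : R) (p : nat) : R := 2 * (al - be) * (INR p + 1).

Lemma cheb_coef_recurrence al be n p : -1 < al -> (p < n)%nat ->
  cheb_rec_A al be n p * cheb_coef al be n p =
  cheb_rec_B al be n p * cheb_coef al be n (S (S p))
  + cheb_rec_C al be p * cheb_coef al be n (S p).
Proof.
  intros Hal Hp. unfold cheb_rec_A, cheb_rec_B, cheb_rec_C.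
  rewrite cheb_coef_succ_succ, cheb_coef_succ by exact Hp.
  unfold cheb_coef at 1. replace (p <=? n)%nat with true by (symmetry; apply Nat.leb_le; lia).
  assert (0 <= INR p) by apply pos_INR.
  set (g := cheb_term al be n p).
  (* Creative-telescoping certificate: the summand of the recurrence is [Z s - z s]
     and [Z s = z (S s)]. *)
  set (z := fun s => - 4 * (INR p + 1) * (INR p + INR s + al) * INR s * g s
                     / (2 * INR p + 1 + INR s)).
  set (Z := fun s => 4 * (INR p + 1) * g s * (INR n + al + be + 1 + INR p + INR s)
                     * (INR p + INR s + /2) * (INR n - INR p - INR s)
                     / ((2 * INR p + 2 + INR s) * (2 * INR p + 1 + INR s))).
  assert (Htel : sum_f_R0 (fun s => Z s - z s) (n - p) = 0).
  { apply sum_f_R0_telescope_zero.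
    - intros s Hs. assert (0 <= INR s) by apply pos_INR.
      unfold Z, z, g. rewrite (cheb_term_succ al be n p s Hal) by lia.
      rewrite S_INR. field. lra.
    - unfold Z. rewrite minus_INR by lia.
      assert (INR p <= INR n) by (apply le_INR; lia).
      field. lra.
    - unfold z. rewrite INR_0. field. lra. }
  apply Rminus_diag_uniq. rewrite <- Htel, !scal_sum, <- plus_sum, <- minus_sum.
  apply sum_eq. intros s _. assert (0 <= INR s) by apply pos_INR.
  unfold Z, z. field. lra.
Qed.

Lemma cheb_coef_above al be n : cheb_coef al be n (S n) = 0.
Proof. unfold cheb_coef. replace (S n <=? n)%nat with false by (symmetry; apply Nat.leb_gt; lia). reflexivity. Qed.

Lemma cheb_coef_top al be n : -1 < al -> -1 < be -> (1 <= n)%nat ->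
  0 < cheb_coef al be n n.
Proof.
  intros Ha Hb Hn. unfold cheb_coef, cheb_term, cheb_B.
  rewrite Nat.leb_refl, Nat.sub_diag. simpl sum_f_R0.
  rewrite !Nat.add_0_r, Nat.sub_diag. simpl poch. simpl fact. simpl INR.
  apply le_INR in Hn. simpl INR in Hn.
  assert (0 < poch (INR n + al + be + 1) n) by (apply poch_pos; lra).
  assert (0 < poch (/2) n) by (apply poch_pos; lra).
  assert (0 < INR (fact (n + n))) by apply INR_fact_lt_0.
  replace (1 * (poch (INR n + al + be + 1) n * 1 * poch (/2) n / 1) / (1 * INR (fact (n + n))))
    with (poch (INR n + al + be + 1) n * poch (/2) n / INR (fact (n + n))) by (field; lra).
  apply Rdiv_lt_0_compat; [apply Rmult_lt_0_compat|]; assumption.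
Qed.

Lemma cheb_rec_A_pos al be n p : -1 < al -> -1 < be -> (p < n)%nat ->
  0 < cheb_rec_A al be n p.
Proof.
  intros Ha Hb Hp. unfold cheb_rec_A.
  assert (0 <= INR p) by apply pos_INR.
  assert (INR p + 1 <= INR n) by (rewrite <- S_INR; apply le_INR; lia).
  apply Rmult_lt_0_compat; lra.
Qed.

Lemma cheb_rec_B_nonneg al be n p : al + be >= -1 -> (S (S p) <= n)%nat ->
  0 <= cheb_rec_B al be n p.
Proof.
  intros Hsum Hp. unfold cheb_rec_B.
  assert (0 <= INR p) by apply pos_INR.
  assert (INR p + 1 + 1 <= INR n) by (rewrite <- !S_INR; apply le_INR; lia).
  apply Rmult_le_pos; lra.
Qed.

Lemma cheb_rec_B_pos al be n p : al + be > -1 -> (S (S p) <= n)%nat ->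
  0 < cheb_rec_B al be n p.
Proof.
  intros Hsum Hp. unfold cheb_rec_B.
  assert (0 <= INR p) by apply pos_INR.
  assert (INR p + 1 + 1 <= INR n) by (rewrite <- !S_INR; apply le_INR; lia).
  apply Rmult_lt_0_compat; lra.
Qed.

Lemma cheb_coef_pos al be n : -1 < al -> -1 < be -> al + be >= -1 -> be < al ->
  (1 <= n)%nat -> forall k, (k <= n)%nat -> 0 < cheb_coef al be n k.
Proof.
  intros Ha Hb Hsum Hab Hn.
  apply (recurrence_pos _ (cheb_rec_A al be n) (cheb_rec_B al be n) (cheb_rec_C al be)).
  - apply cheb_coef_above.
  - apply cheb_coef_top; assumption.
  - intros p Hp. split; [|split; [|split]].
    + apply cheb_rec_A_pos; assumption.
    + intros HSSp. apply cheb_rec_B_nonneg; assumption.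
    + unfold cheb_rec_C. pose proof (pos_INR p). apply Rmult_lt_0_compat; lra.
    + apply cheb_coef_recurrence; assumption.
Qed.

Lemma cheb_coef_sign al be n : -1 < al -> -1 < be -> al + be >= -1 -> al < be ->
  (1 <= n)%nat -> forall k, (k <= n)%nat -> 0 < (-1) ^ (n + k) * cheb_coef al be n k.
Proof.
  intros Ha Hb Hsum Hab Hn.
  apply (recurrence_pos (fun k => (-1) ^ (n + k) * cheb_coef al be n k)
           (cheb_rec_A al be n) (cheb_rec_B al be n) (cheb_rec_C be al)).
  - rewrite cheb_coef_above. ring.
  - replace (n + n)%nat with (2 * n)%nat by lia. rewrite pow_1_even, Rmult_1_l.
    apply cheb_coef_top; assumption.
  - intros p Hp. split; [|split; [|split]].
    + apply cheb_rec_A_pos; assumption.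
    + intros HSSp. apply cheb_rec_B_nonneg; assumption.
    + unfold cheb_rec_C. pose proof (pos_INR p). apply Rmult_lt_0_compat; lra.
    + replace (n + S (S p))%nat with (S (S (n + p))) by lia.
      replace (n + S p)%nat with (S (n + p)) by lia.
      rewrite <- !tech_pow_Rmult.
      transitivity ((-1) ^ (n + p) * (cheb_rec_A al be n p * cheb_coef al be n p)); [ring|].
      rewrite cheb_coef_recurrence by assumption. unfold cheb_rec_C. ring.
Qed.

Lemma cheb_coef_parity al n : - / 2 < al -> (1 <= n)%nat ->
  forall t, (t <= n)%nat -> alternating t (cheb_coef al al n (n - t)).
Proof.
  intros Ha Hn.
  apply (recurrence_parity _ (cheb_rec_A al al n) (cheb_rec_B al al n)).
  - apply cheb_coef_above.
  - apply cheb_coef_top; [lra | lra | exact Hn].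
  - intros p Hp. split; [|split].
    + apply cheb_rec_A_pos; [lra | lra | exact Hp].
    + intros HSSp. apply cheb_rec_B_pos; [lra | exact HSSp].
    + rewrite (cheb_coef_recurrence al al n p ltac:(lra) Hp). unfold cheb_rec_C. ring.
Qed.

Lemma alternating_spec t x :
  alternating t x -> (Nat.Even t -> 0 < x) /\ (Nat.Odd t -> x = 0).
Proof.
  unfold alternating. intros H. split; intros Ht.
  - apply Nat.even_spec in Ht. rewrite Ht in H. exact H.
  - apply Nat.odd_spec in Ht. rewrite <- Nat.negb_odd, Ht in H. exact H.
Qed.

Lemma cheb_coef_chebyshev n : (2 <= n)%nat ->
  forall k, (k < n)%nat -> cheb_coef (- / 2) (- / 2) n k = 0.
Proof.
  intros Hn k Hk.
  set (A := cheb_rec_A (- / 2) (- / 2) n).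
  assert (HA : forall p, (p < n)%nat -> A p <> 0).
  { intros p Hp. apply Rgt_not_eq, cheb_rec_A_pos; [lra | lra | exact Hp]. }
  assert (Hrec := fun p Hp => cheb_coef_recurrence (- / 2) (- / 2) n p ltac:(lra) Hp).
  apply (recurrence_zero_below _ A (cheb_rec_B (- / 2) (- / 2) n) (cheb_rec_C (- / 2) (- / 2))
           (n - 2)); [| | |lia].
  - apply (Rmult_eq_reg_l (A (n - 2)%nat)); [|apply HA; lia].
    unfold A. rewrite Hrec by lia. unfold cheb_rec_B, cheb_rec_C.
    rewrite minus_INR by lia. simpl INR. field.
  - replace (S (n - 2)) with (n - 1)%nat by lia.
    apply (Rmult_eq_reg_l (A (n - 1)%nat)); [|apply HA; lia].
    unfold A. rewrite Hrec by lia. replace (S (S (n - 1))) with (S n) by lia.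
    rewrite cheb_coef_above. unfold cheb_rec_C. ring.
  - intros p Hp. split; [apply HA; lia | apply Hrec; lia].
Qed.

Lemma pow_neg1_sub n k : (k <= n)%nat -> (-1) ^ (n - k) = (-1) ^ (n + k).
Proof.
  intros Hk. replace (n + k)%nat with (2 * k + (n - k))%nat by lia.
  rewrite pow_add, pow_1_even. ring.
Qed.

Theorem mainTheorem3 (alpha beta : R) (n : nat) :
  -1 < alpha -> -1 < beta -> (1 <= n)%nat ->
  (forall k : nat, (k <= n)%nat ->
     (alpha > beta -> alpha + beta >= -1 -> dkn alpha beta k n > 0) /\
     (alpha < beta -> alpha + beta >= -1 -> (-1) ^ (n - k) * dkn alpha beta k n > 0) /\
     (alpha = beta -> alpha > - / 2 ->
        (Nat.Even (n - k) -> dkn alpha beta k n > 0) /\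
        (Nat.Odd (n - k) -> dkn alpha beta k n = 0))) /\
  (alpha = - / 2 -> beta = - / 2 ->
     dkn alpha beta n n > 0 /\
     (forall k : nat, (1 <= k)%nat -> (k <= n - 1)%nat -> dkn alpha beta k n = 0)).
Proof.
  intros Ha Hb Hn. split.
  - intros k Hk. rewrite dkn_cheb_coef by assumption.
    split; [|split].
    + intros Hab Hsum. apply Rlt_gt, cheb_coef_pos; assumption || lra.
    + intros Hab Hsum. rewrite pow_neg1_sub by exact Hk.
      apply Rlt_gt, cheb_coef_sign; assumption || lra.
    + intros <- Hhalf.
      assert (Hpar := cheb_coef_parity alpha n ltac:(lra) Hn (n - k) ltac:(lia)).
      replace (n - (n - k))%nat with k in Hpar by lia.
      destruct (alternating_spec _ _ Hpar) as [Hev Hodd].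
      split; [intros H; apply Rlt_gt|]; auto.
  - intros -> ->. split.
    + rewrite dkn_cheb_coef by (lra || lia). apply Rlt_gt, cheb_coef_top; lra || lia.
    + intros k Hk1 Hk2. rewrite dkn_cheb_coef by (lra || lia).
      apply cheb_coef_chebyshev; lia.
Qed.
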